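(* Let $(C,\mathfrak p,\mathfrak d)$ be a regular $q$-magma coalgebra. If $0\le i,j,k\le n-1$ and $k>i$, then $\mathfrak p_{ij}^k=\mathfrak d_{ij}^k=0$.
   Context: $K$ is an algebraically closed field of characteristic $0$ and $n\ge2$. $C$ is the coalgebra dual to $K[y]/\langle y^n\rangle$: basis $x_0,\dots,x_{n-1}$, $\Delta(x_i)=\sum_{j+k=i}x_j\otimes x_k$, $\epsilon(x_i)=\delta_{i0}$; $C\otimes C$ has the tensor product coalgebra structure; Sweedler notation $\Delta(b)=b_{(1)}\otimes b_{(2)}$. For linear maps $\mathfrak p,\mathfrak d\colon C\otimes C\to C$ write $a\cdot b=\mathfrak p(a\otimes b)$, $a:b=\mathfrak d(a\otimes b)$, $\mathfrak p(x_i\otimes x_j)=\sum_{k=0}^{n-1}\mathfrak p_{ij}^kx_k$, $\mathfrak d(x_i\otimes x_j)=\sum_{k=0}^{n-1}\mathfrak d_{ij}^kx_k$. A triple $(C,\mathfrak p,\mathfrak d)$ with $\mathfrak p,\mathfrak d$ coalgebra morphisms is a regular $q$-magma coalgebra if there are coalgebra morphisms $a\otimes b\mapsto a^b$, $a\otimes b\mapsto a_b$ from $C\otimes C$ to $C$ with $a^{b_{(1)}}\cdot b_{(2)}=(a\cdot b_{(1)})^{b_{(2)}}=\epsilon(b)a$ and $(a:b_{(2)})_{b_{(1)}}=a_{b_{(2)}}:b_{(1)}=\epsilon(b)a$ for all $a,b\in C$. *)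

From mathcomp Require Import all_boot all_order all_algebra.
Set Implicit Arguments. Unset Strict Implicit. Unset Printing Implicit Defensive.
Import GRing.Theory.
Local Open Scope ring_scope.

(* C has basis x_0..x_{n-1} (indexed by 'I_n); C (x) C has basis x_i (x) x_j.
   A linear map f : C (x) C -> C is given by its structure constants:
   f i j k = f_{ij}^k, i.e. f (x_i (x) x_j) = \sum_k f i j k x_k. *)
Definition bilin (K : Type) (n : nat) := 'I_n -> 'I_n -> 'I_n -> K.

Definition eps {K : nzRingType} {n : nat} (m : 'I_n) : K := (m == 0%N :> nat)%:R.

(* f : C (x) C -> C is a coalgebra morphism, C (x) C with the tensor product
   coalgebra structure:
   Delta(x_i (x) x_j) = \sum_{a+b=i} \sum_{c+e=j} (x_a (x) x_c) (x) (x_b (x) x_e),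
   eps(x_i (x) x_j) = eps(x_i) eps(x_j).
   Condition 1 compares coefficients of x_k (x) x_l in
   Delta(f(x_i (x) x_j)) and (f (x) f)(Delta(x_i (x) x_j));
   condition 2 is eps o f = eps_{C (x) C}. *)
Definition is_coalg_morphism (K : nzRingType) (n : nat) (f : bilin K n) : Prop :=
  (forall i j k l : 'I_n,
      \sum_(m < n | (m : nat) == (k + l)%N) f i j m =
      \sum_(a < n) \sum_(b < n | (a + b)%N == i) \sum_(c < n) \sum_(e < n | (c + e)%N == j)
         f a c k * f b e l)
  /\ (forall i j : 'I_n, \sum_(m < n) f i j m * eps m = eps i * eps j).

(* (C, p, d) is a regular q-magma coalgebra: p, d are coalgebra morphisms and there
   are coalgebra morphisms u (a (x) b |-> a^b) and v (a (x) b |-> a_b) with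
     a^{b_(1)} . b_(2)    = eps(b) a,
     (a . b_(1))^{b_(2)}  = eps(b) a,
     (a : b_(2))_{b_(1)}  = eps(b) a,
     a_{b_(2)} : b_(1)    = eps(b) a,
   checked on basis elements a = x_i, b = x_j (coefficient of x_k), with
   Delta(x_j) = \sum_{c+e=j} x_c (x) x_e. *)
Definition regular_q_magma_coalgebra (K : nzRingType) (n : nat) (p d : bilin K n) : Prop :=
  is_coalg_morphism p /\ is_coalg_morphism d /\
  exists u v : bilin K n,
    is_coalg_morphism u /\ is_coalg_morphism v /\
    (forall i j k : 'I_n,
       \sum_(c < n) \sum_(e < n | (c + e)%N == j) \sum_(m < n) u i c m * p m e k
         = eps j * (i == k)%:R) /\
    (forall i j k : 'I_n,
       \sum_(c < n) \sum_(e < n | (c + e)%N == j) \sum_(m < n) p i c m * u m e k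
         = eps j * (i == k)%:R) /\
    (forall i j k : 'I_n,
       \sum_(c < n) \sum_(e < n | (c + e)%N == j) \sum_(m < n) d i e m * v m c k
         = eps j * (i == k)%:R) /\
    (forall i j k : 'I_n,
       \sum_(c < n) \sum_(e < n | (c + e)%N == j) \sum_(m < n) v i e m * d m c k
         = eps j * (i == k)%:R).

From mathcomp Require Import all_boot all_order all_algebra zify ring.
Set Implicit Arguments. Unset Strict Implicit. Unset Printing Implicit Defensive.
Import GRing.Theory.
Local Open Scope ring_scope.

(* Dually, f : C (x) C -> C is a coalgebra morphism iff y |-> phi := sum f_{ac}^1 s^a t^c
   is an algebra map K[y]/(y^n) -> K[s,t]/(s^n, t^n), and then f_{ac}^k = [sconst f k a c]
   is the coefficient of s^a t^c in phi^k.  Nilpotency of phi kills its constant term, and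
   an inverse identity of the regular structure, taken at x_1 (x) x_0, shows that the
   coefficient alpha of s in phi is nonzero, both for p and for d.  If phi contained a pure
   power of t, with lowest one beta t^m, the coefficient of s^(n-1) t^m in phi^n = 0 would be
   n alpha^(n-1) beta, nonzero in characteristic 0.  So s divides phi, hence s^k divides
   phi^k, which is the claim. *)

Lemma big_ord_antidiag (R : nmodType) n (G : 'I_n.+1 -> 'I_n.+1 -> R) i :
  (i < n.+1)%N ->
  \sum_(a < n.+1) \sum_(b < n.+1 | (a + b)%N == i) G a b
    = \sum_(a < i.+1) G (inord a) (inord (i - a)).
Proof.
move=> hi.
have -> : \sum_(a < n.+1) \sum_(b < n.+1 | (a + b)%N == i) G a b
    = \sum_(a < n.+1 | (a < i.+1)%N) G (inord a) (inord (i - a)).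
  rewrite [RHS]big_mkcond; apply: eq_bigr => a _; rewrite inord_val.
  case: ifPn => ai; last by rewrite big_pred0 // => b; apply/eqP; lia.
  apply: big_pred1 => b /=; rewrite -val_eqE /= inordK; last by lia.
  by apply/eqP/eqP; lia.
by rewrite (big_ord_narrow_cond (P := predT) hi).
Qed.

Section StructureConstants.
Variables (K : nzRingType) (n : nat) (f : bilin K n.+1).

Definition sconst (k a c : nat) : K :=
  if [&& k < n.+1, a < n.+1 & c < n.+1]%N then f (inord a) (inord c) (inord k)
  else 0.

Lemma sconstE (k a c : 'I_n.+1) : sconst k a c = f a c k.
Proof. by rewrite /sconst !ltn_ord !inord_val. Qed.

Lemma sconst_out k a c :
  ~~ [&& k < n.+1, a < n.+1 & c < n.+1]%N -> sconst k a c = 0.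
Proof. by rewrite /sconst => /negbTE ->. Qed.

Hypothesis hf : is_coalg_morphism f.

Lemma sconst0E a c : sconst 0 a c = ((a == 0%N) && (c == 0%N))%:R.
Proof.
have [/and3P[_ ha hc] | out] := boolP [&& 0 < n.+1, a < n.+1 & c < n.+1]%N; last first.
  by rewrite sconst_out //; move: out; case: a c => [|a] [|c].
have := hf.2 (inord a) (inord c); rewrite /eps !inordK // -natrM mulnb => <-.
rewrite big_ord_recl big1 => [|m _]; last by rewrite mulr0.
by rewrite /sconst ha hc (inord_val ord0) mulr1 addr0.
Qed.

Lemma sconst_addn k l i j : (i < n.+1)%N -> (j < n.+1)%N ->
  sconst (k + l) i j
    = \sum_(a < i.+1) \sum_(c < j.+1) sconst k a c * sconst l (i - a) (j - c).
Proof.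
move=> hi hj.
have [/andP[hk hl] | out] := boolP ((k < n.+1) && (l < n.+1))%N; last first.
  rewrite sconst_out; last by lia.
  symmetry; apply: big1 => a _; apply: big1 => c _.
  case/nandP: out => out; first by rewrite sconst_out ?mul0r // (negbTE out).
  by rewrite [sconst l _ _]sconst_out ?mulr0 // (negbTE out).
have := hf.1 (inord i) (inord j) (inord k) (inord l); rewrite !inordK //.
have -> : \sum_(m < n.+1 | (m : nat) == (k + l)%N) f (inord i) (inord j) m
    = sconst (k + l) i j.
  have [hkl | hkl] := ltnP (k + l) n.+1; last first.
    by rewrite big_pred0 ?sconst_out // => [|m]; [lia | apply/eqP; have := ltn_ord m; lia].
  rewrite (big_pred1 (inord (k + l))) => [|m]; first by rewrite /sconst hkl hi hj.
  by rewrite /= -val_eqE /= inordK.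
move=> ->; rewrite (big_ord_antidiag _ hi); apply: eq_bigr => a _.
rewrite (big_ord_antidiag _ hj); apply: eq_bigr => c _.
have := ltn_ord a; have := ltn_ord c => ??.
by rewrite /sconst hk hl !ifT //; lia.
Qed.

Lemma sconst_succ k i j : (i < n.+1)%N -> (j < n.+1)%N ->
  sconst k.+1 i j
    = \sum_(a < i.+1) \sum_(c < j.+1) sconst k a c * sconst 1 (i - a) (j - c).
Proof. by rewrite -[k.+1]addn1; apply: sconst_addn. Qed.

Lemma sconst00_addn k l : sconst (k + l) 0 0 = sconst k 0 0 * sconst l 0 0.
Proof. by rewrite sconst_addn // !big_ord1. Qed.

Lemma sconst_lt_eq0 : (forall j, sconst 1 0 j = 0) ->
  forall k i j, (i < k)%N -> sconst k i j = 0.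
Proof.
move=> pure0; elim=> // k IH i j ik.
have [/andP[hi hj] | out] := boolP ((i < n.+1) && (j < n.+1))%N; last first.
  by rewrite sconst_out //; lia.
rewrite sconst_succ //; apply: big1 => a _; apply: big1 => c _.
have [ak | ka] := ltnP a k; first by rewrite IH ?mul0r.
by rewrite (_ : i - a = 0)%N ?pure0 ?mulr0 //; have := ltn_ord a; lia.
Qed.

End StructureConstants.
Section IntegralDomain.
Variables (K : idomainType) (n : nat) (f : bilin K n.+1).
Hypothesis hf : is_coalg_morphism f.

Lemma sconst00_eq0 k : (0 < k)%N -> sconst f k 0 0 = 0.
Proof.
have pow k' : sconst f k'.+1 0 0 = sconst f 1 0 0 ^+ k'.+1.
  by elim: k' => [|k' IH]; rewrite ?expr1 // -addn1 sconst00_addn // IH -exprSr addn1.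
have /eqP : sconst f 1 0 0 ^+ n.+1 = 0 by rewrite -pow sconst_out // ltnn.
rewrite expf_eq0 /= => /eqP c0.
by case: k => // k _; rewrite pow c0 expr0n.
Qed.

Lemma sconst10_eq0 m : m != 1%N -> sconst f m 1 0 = 0.
Proof.
case: m => [_ | [// | m _]]; first by rewrite sconst0E.
have [n1 | n0] := ltnP 1 n.+1; last by rewrite sconst_out //; lia.
rewrite sconst_succ // big_ord_recr !big_ord1 /=.
by rewrite sconst00_eq0 // [sconst f 1 0 0]sconst00_eq0 // mul0r mulr0 addr0.
Qed.

Lemma inverse_sconst10_neq0 (h : bilin K n.+1) : (1 < n.+1)%N ->
  \sum_(m < n.+1) f (inord 1) (inord 0) m * h m (inord 0) (inord 1) = 1 ->
  sconst h 1 1 0 != 0.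
Proof.
move=> n1 inv; apply/eqP => h0; move/eqP: inv; apply/negP.
rewrite big1 ?(eq_sym 0) ?oner_eq0 // => m _.
rewrite -[f _ _ m]sconstE -[h m _ _]sconstE !inordK //.
have [->|m1] := eqVneq (m : nat) 1%N; first by rewrite h0 mulr0.
by rewrite sconst10_eq0 ?mul0r.
Qed.

Section PureMonomial.
Variable m : nat.
Hypothesis below_m : forall j, (j < m)%N -> sconst f 1 0 j = 0.
Hypothesis beta_neq0 : sconst f 1 0 m != 0.
Let alpha := sconst f 1 1 0.
Let beta := sconst f 1 0 m.

Let m_gt0 : (0 < m)%N.
Proof. by apply: contraNT beta_neq0; rewrite -eqn0Ngt => /eqP ->; rewrite sconst00_eq0. Qed.

Let m_lt : (m < n.+1)%N.
Proof. by apply: contraNT beta_neq0; rewrite -leqNgt => hm; rewrite sconst_out //; lia. Qed.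

(* With phi = s A + t^m B, A(0,0) = alpha and B(0) = beta, these coefficients of phi^k
   are read off phi^k = sum_r 'C(k, r) s^r A^r t^(m(k-r)) B^(k-r). *)
Definition low_sconst k : Prop :=
  [/\ forall a c, (a < k)%N -> (c < m)%N -> sconst f k a c = 0,
      forall a, (a.+1 < k)%N -> sconst f k a m = 0,
      sconst f k k.-1 m = k%:R * alpha ^+ k.-1 * beta &
      sconst f k k 0 = alpha ^+ k].

Lemma low_sconst1 : low_sconst 1.
Proof.
split=> //; last by rewrite mul1r expr0 mul1r.
by move=> a c; rewrite ltnS leqn0 => /eqP -> /below_m.
Qed.

Lemma sconst_succ_subdiag k : (0 < k)%N -> (k < n.+1)%N -> low_sconst k ->
  sconst f k.+1 k m = k.+1%:R * alpha ^+ k * beta.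
Proof.
case: k => // k _ kn [L1 L2 L3 L4].
rewrite sconst_succ // big_ord_recr big_ord_recr /= subnn subSnn.
rewrite big1 ?add0r => [|a _]; last first.
  apply: big1 => c _; have := ltn_ord a; have := ltn_ord c => ? ?.
  have [cm | mc] := ltnP c m; first by rewrite L1 ?mul0r //; lia.
  by rewrite (_ : c = m :> nat) ?L2 ?mul0r //; lia.
rewrite big_ord_recr big1 ?add0r => [|c _]; last by rewrite L1 ?mul0r //= ltn_ord.
rewrite big_ord_recl big1 ?addr0 => [|c _]; last by rewrite below_m ?mulr0 // lift0; lia.
rewrite /= subnn subn0 L4 -/beta -/alpha; move: L3 => /= ->.
rewrite add0r exprS; ring.
Qed.

Lemma low_sconstS k : (0 < k)%N -> (k.+1 < n.+1)%N -> low_sconst k -> low_sconst k.+1.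
Proof.
move=> k0 kn Lk; have [L1 L2 _ L4] := Lk; split.
- move=> a c ak cm; rewrite (sconst_succ hf); try lia.
  apply: big1 => a' _; apply: big1 => c' _; have := ltn_ord a'; have := ltn_ord c' => ? ?.
  have [a'k | ka'] := ltnP a' k; first by rewrite L1 ?mul0r //; lia.
  by rewrite (_ : a - a' = 0)%N ?below_m ?mulr0 //; lia.
- move=> a ak; rewrite (sconst_succ hf); try lia.
  apply: big1 => a' _; apply: big1 => c' _; have := ltn_ord a'; have := ltn_ord c' => ? ?.
  have [c'm | mc'] := ltnP c' m; first by rewrite L1 ?mul0r //; lia.
  rewrite (_ : c' = m :> nat); last by lia.
  have [a'a | aa'] := ltnP a' a; first by rewrite L2 ?mul0r //; lia.
  by rewrite subnn (_ : a - a' = 0)%N ?sconst00_eq0 ?mulr0 //; lia.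
- by rewrite sconst_succ_subdiag //; lia.
- rewrite (sconst_succ hf); try lia.
  rewrite big_ord_recr big_ord_recr /= big1 ?add0r => [|a _]; last first.
    by rewrite big_ord1 L1 ?mul0r //= ltnW.
  by rewrite !big_ord1 /= subSnn !subnn [sconst f 1 0 0]sconst00_eq0 // mulr0 addr0 L4 -exprSr.
Qed.

Lemma low_sconst_le k : (0 < k)%N -> (k < n.+1)%N -> low_sconst k.
Proof.
elim: k => // k IH _ kn; have [-> | k0] := posnP k; first exact: low_sconst1.
by apply: low_sconstS => //; apply: IH => //; lia.
Qed.

Lemma pure_monomial_nilpotent : n.+1%:R * alpha ^+ n * beta = 0.
Proof.
have n_gt0 : (0 < n)%N by lia.
have := sconst_succ_subdiag n_gt0 (ltnSn n) (low_sconst_le n_gt0 (ltnSn n)).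
by rewrite sconst_out // ltnn.
Qed.

End PureMonomial.

Lemma sconst1_0_eq0 : [pchar K] =i pred0 -> sconst f 1 1 0 != 0 ->
  forall j, sconst f 1 0 j = 0.
Proof.
move=> /pcharf0P char0 alpha_neq0 j; apply/eqP/negPn/negP => nz.
have ex_nz : exists j, sconst f 1 0 j != 0 by exists j.
have [m beta_neq0 min_m] := ex_minnP ex_nz.
have below_m i : (i < m)%N -> sconst f 1 0 i = 0.
  by move=> im; apply/eqP; apply: contraTT im => /min_m; rewrite -leqNgt.
have /eqP := pure_monomial_nilpotent below_m beta_neq0.
by rewrite !mulf_eq0 char0 expf_eq0 (negbTE alpha_neq0) (negbTE beta_neq0) andbF.
Qed.

End IntegralDomain.

Unset Implicit Arguments.
Set Strict Implicit.

Theorem proposition1p14 (K : closedFieldType) (n : nat)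
  (charK0 : [pchar K] =i pred0) (hn : (2 <= n)%N) (p d : bilin K n) :
  regular_q_magma_coalgebra p d ->
  forall i j k : 'I_n, (i < k)%N -> p i j k = 0 /\ d i j k = 0.
Proof.
case: n hn p d => [|[|n]] // _ p d [hp [hd [u [v [hu [hv [up [_ [_ vd]]]]]]]]] i j k ik.
have p_neq0 : sconst p 1 1 0 != 0.
  apply: (inverse_sconst10_neq0 hu) => //.
  have := up (inord 1) ord0 (inord 1); rewrite big_ord_antidiag // big_ord1 subnn => ->.
  by rewrite eqxx mulr1.
have d_neq0 : sconst d 1 1 0 != 0.
  apply: (inverse_sconst10_neq0 hv) => //.
  have := vd (inord 1) ord0 (inord 1); rewrite big_ord_antidiag // big_ord1 subnn => ->.
  by rewrite eqxx mulr1.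
by rewrite -!sconstE; split; apply: sconst_lt_eq0 => //; apply: sconst1_0_eq0.
Qed.
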